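(* Let $T$ be an MFQST under either the explicit bound or the node-weighted strategy. Let $x$ be any node of $T$, let $u$ be any in-neighbour of $x$ and let $y$ be the out-neighbour of $x$, with $u\ne x\ne y$. Then the angle $\angle uxy$ is at least $90^\circ$.
   Context: Let $Z=\{z_1,\dots,z_n\}\subset\mathbb{R}^2$ ($n\ge 1$) be a set of sources and $z_{BS}\in\mathbb{R}^2\setminus Z$ a sink; each source has supply $1$. A flow-dependent quadratic Steiner tree (FQST) consists of a finite set $S\subset\mathbb{R}^2$ of Steiner points and a tree $T$ with vertex set $Z\cup S\cup\{z_{BS}\}$ whose edges are directed towards $z_{BS}$. Every node other than the sink has exactly one out-edge, and the sink has none. Each edge $e$ carries a positive flow $f(e)$ such that: - at each source, the flow on its out-edge minus the total flow on its in-edges equals $1$; - at each Steiner point, the out-flow equals the total in-flow; - the sink receives total flow $n$. The cost is $L(T)=\sum_{e\in E(T)} f(e)|e|^2$. In-neighbours of a node are the tails of its in-edges; its out-neighbour is the head of its out-edge. MFQSTs under the two strategies: - Explicit bound $k$: an MFQST minimises $L$ among FQSTs with $|S|\le k$. - Node-weighted with cost $c>0$: an MFQST minimises $L_c(T)=L(T)+c|S|$ over all FQSTs. No degree restrictions are imposed in either case. *)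

From mathcomp Require Import all_boot.
From Stdlib Require Import Reals.

Set Implicit Arguments.
Unset Strict Implicit.
Unset Printing Implicit Defensive.

Local Open Scope R_scope.

Definition point := (R * R)%type.

Definition dot (a b : point) : R := a.1 * b.1 + a.2 * b.2.
Definition vsub (a b : point) : point := (a.1 - b.1, a.2 - b.2).
Definition dist2 (a b : point) : R := dot (vsub a b) (vsub a b).
Definition norm (a : point) : R := sqrt (dot a a).

Definition angle (u x y : point) : R :=
  acos (dot (vsub u x) (vsub y x) / (norm (vsub u x) * norm (vsub y x))).

(* Nodes of an FQST with n sources and m Steiner points:
   None = the sink z_BS, Some (inl i) = source z_i, Some (inr j) = Steiner point j. *)
Definition node (n m : nat) := option ('I_n + 'I_m)%type.

Definition sink {n m : nat} : node n m := None.

(* Every non-sink node v has exactly one out-edge v -> par v,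
   carrying flow fl v; the sink has no out-edge (par sink is irrelevant).
   The graph is a tree directed towards the sink: iterating par from any
   node reaches the sink.  Steiner points are pairwise distinct and distinct
   from the sources and the sink (S is a set and the vertex set is
   Z ∪ S ∪ {z_BS}). *)
Record FQST (n : nat) (Z : 'I_n -> point) (zBS : point) := {
  nS : nat;
  spos : 'I_nS -> point;
  par : node n nS -> node n nS;
  fl : node n nS -> R;
  spos_inj : injective spos;
  spos_notZ : forall j i, spos j <> Z i;
  spos_notsink : forall j, spos j <> zBS;
  par_reach : forall v, exists k, iter k par v = sink;
  fl_pos : forall v, v != sink -> 0 < fl v;
  fl_source : forall i : 'I_n,
      fl (Some (inl i)) - \big[Rplus/0]_(w | (w != sink) && (par w == Some (inl i))) fl w = 1;
  fl_steiner : forall j : 'I_nS,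
      fl (Some (inr j)) = \big[Rplus/0]_(w | (w != sink) && (par w == Some (inr j))) fl w;
  fl_sink : \big[Rplus/0]_(w | (w != sink) && (par w == sink)) fl w = INR n
}.

Arguments nS {n Z zBS} f.
Arguments spos {n Z zBS} f _.
Arguments par {n Z zBS} f _.
Arguments fl {n Z zBS} f _.

Definition npos {n} {Z : 'I_n -> point} {zBS} (T : FQST Z zBS) (v : node n (nS T)) : point :=
  match v with
  | None => zBS
  | Some (inl i) => Z i
  | Some (inr j) => spos T j
  end.
Arguments npos {n Z zBS} T v.

Definition cost {n} {Z : 'I_n -> point} {zBS} (T : FQST Z zBS) : R :=
  \big[Rplus/0]_(v | v != sink) (fl T v * dist2 (npos T v) (npos T (par T v))).

Definition cost_c {n} {Z : 'I_n -> point} {zBS} (c : R) (T : FQST Z zBS) : R :=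
  cost T + c * INR (nS T).

Definition MFQST_bound {n} {Z : 'I_n -> point} {zBS} (k : nat) (T : FQST Z zBS) : Prop :=
  leq (nS T) k /\ forall T' : FQST Z zBS, leq (nS T') k -> cost T <= cost T'.

Definition MFQST_weighted {n} {Z : 'I_n -> point} {zBS} (c : R) (T : FQST Z zBS) : Prop :=
  forall T' : FQST Z zBS, cost_c c T <= cost_c c T'.

(* Let x be a non-sink node with in-neighbour u and out-neighbour y, and suppose the
   angle uxy is acute, i.e. <u - x, y - x> > 0.  We build an FQST with the same
   number of Steiner points and strictly smaller cost, which contradicts optimality
   under either strategy (both minimise cost among trees of equal Steiner size).
   - If f(u) < f(x), reroute the edge u -> x to u -> y and lower the flow on x -> y
     by f(u): the cost changes by f(u)(|uy|^2 - |ux|^2 - |xy|^2) = -2 f(u) <u-x, y-x>.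
   - If f(u) >= f(x), flow conservation forces x to be a Steiner point whose only
     in-neighbour is u, with f(x) = f(u); sliding x towards the midpoint of uy (to a
     position avoiding every other node) strictly decreases |ux|^2 + |xy|^2.
   The file first proves the geometric and counting facts (acos, segment avoidance,
   the midpoint inequality, sums of reals), then the tree facts (depth, flow
   balance), then the two surgeries, and finally the theorem. *)

From HB Require Import structures.
From mathcomp Require Import all_boot.
From Stdlib Require Import Reals Lra Psatz.
Set Implicit Arguments.
Unset Strict Implicit.
Unset Printing Implicit Defensive.

Local Open Scope R_scope.

(* Real addition is a commutative monoid, so the big-operator lemmas of bigop apply
   to the sums of the cost and the flow constraints. *)
HB.instance Definition _ := Monoid.isComLaw.Build R 0 Rplus
  (fun a b c => esym (Rplus_assoc a b c)) Rplus_comm Rplus_0_l.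
(* Real equality is decidable; this makes points eqTypes. *)
HB.instance Definition _ := hasDecEq.Build R (compareP Req_EM_T).

Lemma acos_ge_PI2 r : r <= 0 -> PI / 2 <= acos r.
Proof.
move=> hr; case: (Rle_lt_dec r (-1)) => hr1.
- rewrite /acos; case: Rle_dec => // _; have := PI_RGT_0; lra.
- have [h0 hPI] := acos_bound r.
  apply: Rnot_lt_le => hlt.
  have : 0 < cos (acos r) by apply: cos_gt_0; lra.
  rewrite cos_acos; lra.
Qed.

Lemma injective_family_escapes (T : eqType) (I : finType) (f : I -> T)
    (h : 'I_#|I|.+1 -> T) :
  injective h -> exists k, forall i, h k <> f i.
Proof.
move=> hinj.
case: (boolP [exists k, h k \notin codom f]) => [/existsP [k hk]|].
  by exists k => i e; rewrite e codom_f in hk.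
rewrite negb_exists => /forallP hall; exfalso.
have : leq (size (map h (enum 'I_#|I|.+1))) (size (codom f)).
  apply: uniq_leq_size; first by rewrite map_inj_uniq ?enum_uniq.
  by move=> _ /mapP [k _ ->]; move: (hall k); rewrite negbK.
by rewrite size_map size_codom size_enum_ord ltnn.
Qed.

Lemma segment_avoids (I : finType) (f : I -> point) (m a : point) :
  a <> (0, 0) ->
  exists s, 0 <= s < 1 /\ forall i, (m.1 + s * a.1, m.2 + s * a.2) <> f i.
Proof.
move=> ha; set N := #|I|.
have hN : 0 < INR N.+1 by apply: lt_0_INR; apply/ltP.
pose s (k : 'I_N.+1) := INR k / INR N.+1.
have hs k : 0 <= s k < 1.
  have h1 := pos_INR k.
  have h2 : INR k < INR N.+1 by apply: lt_INR; apply/ltP; exact: ltn_ord.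
  have h3 := Rinv_0_lt_compat _ hN.
  have h4 : INR N.+1 * / INR N.+1 = 1 by apply: Rinv_r; lra.
  rewrite /s /Rdiv; split; nra.
have hinj : injective (fun k => (m.1 + s k * a.1, m.2 + s k * a.2)).
  move=> k1 k2 [e1 e2].
  have es : s k1 = s k2.
    case: (Req_dec_T a.1 0) => h1; last by apply: (Rmult_eq_reg_r a.1) => //; lra.
    case: (Req_dec_T a.2 0) => h2; last by apply: (Rmult_eq_reg_r a.2) => //; lra.
    by case: ha; case: a h1 h2 {e1 e2} => /= ? ? -> ->.
  apply: val_inj; apply: INR_eq; rewrite /s in es.
  by apply: (Rmult_eq_reg_r (/ INR N.+1)); [ | apply: Rinv_neq_0_compat; lra].
have [k hk] := injective_family_escapes f hinj.
by exists (s k).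
Qed.

(* The angle at x is at least a right angle when the arms have non-positive inner
   product (a degenerate arm gives acos 0). *)
Lemma angle_ge_PI2 u x y : dot (vsub u x) (vsub y x) <= 0 -> PI / 2 <= angle u x y.
Proof.
move=> h; apply: acos_ge_PI2.
have hn : 0 <= norm (vsub u x) * norm (vsub y x)
  by apply: Rmult_le_pos; apply: sqrt_pos.
case: (Rle_lt_or_eq_dec _ _ hn) => [hpos|<-]; last by rewrite /Rdiv Rinv_0; lra.
by rewrite /Rdiv; have := Rinv_0_lt_compat _ hpos; nra.
Qed.

Definition midp (U Y : point) : point := ((U.1 + Y.1) / 2, (U.2 + Y.2) / 2).

Definition toward_mid (U X Y : point) (s : R) : point :=
  ((midp U Y).1 + s * (X.1 - (midp U Y).1), (midp U Y).2 + s * (X.2 - (midp U Y).2)).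

(* At the midpoint of UY the inner product is -|UY|^2/4, so an acute vertex X
   is not the midpoint. *)
Lemma acute_off_midpoint U X Y :
  0 < dot (vsub U X) (vsub Y X) -> (X.1 - (midp U Y).1, X.2 - (midp U Y).2) <> (0, 0).
Proof.
rewrite /midp /dot /vsub /= => h [e1 e2].
have hX1 : X.1 = (U.1 + Y.1) / 2 by lra.
have hX2 : X.2 = (U.2 + Y.2) / 2 by lra.
rewrite hX1 hX2 in h.
have := pow2_ge_0 (U.1 - Y.1); have := pow2_ge_0 (U.2 - Y.2); nra.
Qed.

(* Moving an acute vertex X towards the midpoint M of UY shortens |UX|^2 + |XY|^2:
   for P = M + s (X - M) the sum equals |UY|^2/2 + 2 s^2 |X - M|^2. *)
Lemma toward_mid_shorter U X Y s :
  0 <= s < 1 -> 0 < dot (vsub U X) (vsub Y X) ->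
  dist2 U (toward_mid U X Y s) + dist2 (toward_mid U X Y s) Y < dist2 U X + dist2 X Y.
Proof.
move=> hs hacute.
set a1 := X.1 - (midp U Y).1; set a2 := X.2 - (midp U Y).2.
have ha : 0 < a1 ^ 2 + a2 ^ 2.
  have hnz := acute_off_midpoint hacute; rewrite -/a1 -/a2 in hnz.
  case: (Req_dec_T a1 0) => h1; last by have := pow2_ge_0 a2; nra.
  case: (Req_dec_T a2 0) => h2; last by have := pow2_ge_0 a1; nra.
  by case: hnz; rewrite h1 h2.
have -> : dist2 U (toward_mid U X Y s) + dist2 (toward_mid U X Y s) Y =
    dist2 U X + dist2 X Y - 2 * (1 - s ^ 2) * (a1 ^ 2 + a2 ^ 2).
  rewrite /dist2 /dot /vsub /toward_mid /a1 /a2 /midp /=; field.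
have : 0 < 1 - s ^ 2 by nra.
nra.
Qed.

Lemma big_update2 (I : finType) (P : pred I) (F G : I -> R) (a b : I) :
  P a -> P b -> a != b -> (forall w, P w -> w != a -> w != b -> F w = G w) ->
  \big[Rplus/0]_(w | P w) F w =
  \big[Rplus/0]_(w | P w) G w + (F a - G a) + (F b - G b).
Proof.
move=> Pa Pb ab hFG.
rewrite (bigD1 a Pa) (bigD1 b) /=; last by rewrite Pb eq_sym.
rewrite [in RHS](bigD1 a Pa) [in RHS](bigD1 b) /=; last by rewrite Pb eq_sym.
rewrite (eq_bigr G); first by lra.
by move=> w /andP[/andP[Pw wa] wb]; apply: hFG.
Qed.

Lemma big_ge_term (I : finType) (P : pred I) (F : I -> R) a :
  P a -> (forall w, P w -> 0 <= F w) -> F a <= \big[Rplus/0]_(w | P w) F w.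
Proof.
move=> Pa hF; rewrite (bigD1 a Pa) /=.
have : 0 <= \big[Rplus/0]_(w | P w && (w != a)) F w.
  apply: (big_ind (fun r => 0 <= r)); [lra | move=> *; lra |].
  by move=> w /andP[Pw _]; apply: hF.
lra.
Qed.

Lemma big_ge_two_terms (I : finType) (P : pred I) (F : I -> R) a b :
  P a -> P b -> a != b -> (forall w, P w -> 0 <= F w) ->
  F a + F b <= \big[Rplus/0]_(w | P w) F w.
Proof.
move=> Pa Pb ab hF; rewrite (bigD1 a Pa) /=.
have : F b <= \big[Rplus/0]_(w | P w && (w != a)) F w.
  apply: big_ge_term; first by rewrite Pb eq_sym.
  by move=> w /andP[Pw _]; apply: hF.
lra.
Qed.

(* Depth of a node: the number of out-edges leading to the sink.  It strictly
   decreases along edges, which gives well-founded induction on nodes and shows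
   that no node is its own out-neighbour. *)
Section TreeDepth.
Variables (n : nat) (Z : 'I_n -> point) (zBS : point) (T : FQST Z zBS).

Lemma reach_sink v : exists k, iter k (par T) v == sink.
Proof. by have [k hk] := par_reach v; exists k; apply/eqP. Qed.

Definition depth v : nat := ex_minn (reach_sink v).

Lemma depth_sink v : iter (depth v) (par T) v = sink.
Proof. by rewrite /depth; case: ex_minnP => k /eqP. Qed.

Lemma depth_min v k : iter k (par T) v = sink -> leq (depth v) k.
Proof. by rewrite /depth; case: ex_minnP => m _ hmin /eqP /hmin. Qed.

Lemma depth_par_lt v : v != sink -> leq (depth (par T v)).+1 (depth v).
Proof.
move=> hv.
have hpos : leq 1 (depth v).
  rewrite lt0n; apply/eqP => e; move: (depth_sink v); rewrite e => /= ev.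
  by rewrite ev eqxx in hv.
have : iter (depth v).-1 (par T) (par T v) = sink.
  by rewrite -iterSr prednK ?depth_sink.
by move/depth_min; rewrite -ltnS prednK.
Qed.

Lemma depth_ind (P : node n (nS T) -> Prop) :
  (forall v, (forall w, leq (depth w).+1 (depth v) -> P w) -> P v) -> forall v, P v.
Proof.
move=> hstep v.
suff : forall d w, leq (depth w) d -> P w by apply; exact: leqnn.
elim=> [|d IH] w hw; apply: hstep => w' hw'.
- by move: (leq_trans hw' hw).
- by apply: IH; rewrite -ltnS (leq_trans hw' hw).
Qed.

Lemma par_neq v : v != sink -> par T v != v.
Proof. by move=> hv; apply/eqP => e; have := depth_par_lt hv; rewrite e ltnn. Qed.

End TreeDepth.

Arguments depth {n Z zBS T} v.

Definition inflow {n} {Z : 'I_n -> point} {zBS} (T : FQST Z zBS) (z : node n (nS T)) : R :=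
  \big[Rplus/0]_(w | (w != sink) && (par T w == z)) fl T w.
Arguments inflow {n Z zBS} T z.

Lemma inflowE {n} {Z : 'I_n -> point} {zBS} (T : FQST Z zBS) (z : node n (nS T)) :
  inflow T z = \big[Rplus/0]_(w | w != sink) (if par T w == z then fl T w else 0).
Proof. exact: big_mkcondr. Qed.

Lemma source_balance {n} {Z : 'I_n -> point} {zBS} (T : FQST Z zBS) (i : 'I_n) :
  fl T (Some (inl i)) = 1 + inflow T (Some (inl i)).
Proof. by rewrite -(fl_source T i) /inflow /=; ring. Qed.

Lemma steiner_balance {n} {Z : 'I_n -> point} {zBS} (T : FQST Z zBS) (j : 'I_(nS T)) :
  fl T (Some (inr j)) = inflow T (Some (inr j)).
Proof. exact: fl_steiner. Qed.

Lemma child_le_inflow {n} {Z : 'I_n -> point} {zBS} (T : FQST Z zBS) (w : node n (nS T)) :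
  w != sink -> fl T w <= inflow T (par T w).
Proof.
move=> hw; apply: big_ge_term; first by rewrite hw eqxx.
by move=> v /andP[hv _]; apply: Rlt_le; apply: fl_pos.
Qed.

Section Reroute.
Variables (n : nat) (Z : 'I_n -> point) (zBS : point) (T : FQST Z zBS).
Variables (u x : node n (nS T)).
Hypotheses (hu : u != sink) (hx : x != sink) (hux : par T u = x)
  (hlt : fl T u < fl T x).

Let y := par T x.

Let xu : x != u. Proof. by rewrite -hux par_neq. Qed.
Let yx : y != x. Proof. exact: par_neq. Qed.

Definition reroute_par w := if w == u then y else par T w.
Definition reroute_fl w := if w == x then fl T x - fl T u else fl T w.

(* Only the in-flow of x changes, by -f(u); y gains u's flow on one edge and loses
   it on the other. *)
Lemma reroute_inflow z :
  \big[Rplus/0]_(w | (w != sink) && (reroute_par w == z)) reroute_fl w =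
  inflow T z - (if z == x then fl T u else 0).
Proof.
have hother w : w != sink -> w != u -> w != x ->
    (if reroute_par w == z then reroute_fl w else 0) = (if par T w == z then fl T w else 0).
  by move=> _ wu wx; rewrite /reroute_par /reroute_fl (negbTE wu) (negbTE wx).
rewrite inflowE big_mkcondr (big_update2 (P := fun w => w != sink) hu hx _ hother);
  last by rewrite eq_sym.
rewrite /reroute_par /reroute_fl !eqxx (eq_sym u x) (negbTE xu) hux -/y.
case: (z =P x) => [->|zx]; first by rewrite (negbTE yx) eqxx; lra.
have -> : (x == z) = false by apply/eqP => e; apply: zx.
by case: (y == z); lra.
Qed.

Lemma reroute_reach v : exists k, iter k reroute_par v = sink.
Proof.
elim/(@depth_ind _ _ _ T): v => v IH.
case: (v =P sink) => [->|/eqP hv]; first by exists O.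
have hstep : exists w, leq (depth w).+1 (depth v) /\ reroute_par v = w.
  case: (v =P u) => [vu|/eqP vu]; last first.
    by exists (par T v); rewrite /reroute_par (negbTE vu) depth_par_lt.
  exists y; split; last by rewrite /reroute_par vu eqxx.
  by rewrite vu; apply: ltn_trans (depth_par_lt hx) _; rewrite -hux depth_par_lt.
have [w [hw hvw]] := hstep; have [k hk] := IH w hw.
by exists k.+1; rewrite iterSr hvw.
Qed.

Lemma reroute_fl_pos v : v != sink -> 0 < reroute_fl v.
Proof. by move=> hv; rewrite /reroute_fl; case: (v =P x) => _; [lra | exact: fl_pos]. Qed.

Lemma reroute_balance z :
  reroute_fl z - \big[Rplus/0]_(w | (w != sink) && (reroute_par w == z)) reroute_fl w =
  fl T z - inflow T z.
Proof. by rewrite reroute_inflow /reroute_fl; case: eqP => [->|_]; lra. Qed.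

Lemma reroute_source i :
  reroute_fl (Some (inl i)) -
  \big[Rplus/0]_(w | (w != sink) && (reroute_par w == Some (inl i))) reroute_fl w = 1.
Proof. by rewrite reroute_balance; exact: fl_source T i. Qed.

Lemma reroute_steiner j :
  reroute_fl (Some (inr j)) =
  \big[Rplus/0]_(w | (w != sink) && (reroute_par w == Some (inr j))) reroute_fl w.
Proof.
by apply: Rminus_diag_uniq; rewrite reroute_balance; apply: Rminus_diag_eq; exact: fl_steiner T j.
Qed.

Lemma reroute_sink :
  \big[Rplus/0]_(w | (w != sink) && (reroute_par w == sink)) reroute_fl w = INR n.
Proof. by rewrite reroute_inflow /inflow (fl_sink T) eq_sym (negbTE hx); ring. Qed.

Definition rerouted : FQST Z zBS :=
  Build_FQST (@spos_inj _ _ _ T) (@spos_notZ _ _ _ T) (@spos_notsink _ _ _ T) reroute_reach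
    reroute_fl_pos reroute_source reroute_steiner reroute_sink.

(* Cost change: f(u) (|uy|^2 - |ux|^2 - |xy|^2) = -2 f(u) <u - x, y - x>. *)
Lemma rerouted_cost :
  cost rerouted =
  cost T - 2 * fl T u * dot (vsub (npos T u) (npos T x)) (vsub (npos T y) (npos T x)).
Proof.
have hnpos v : npos rerouted v = npos T v by case: v => [[i|k]|].
rewrite /cost (eq_bigr (fun v => reroute_fl v * dist2 (npos T v) (npos T (reroute_par v))));
  last by move=> v _; rewrite !hnpos.
have hother w : w != sink -> w != u -> w != x ->
    reroute_fl w * dist2 (npos T w) (npos T (reroute_par w)) =
    fl T w * dist2 (npos T w) (npos T (par T w)).
  by move=> _ wu wx; rewrite /reroute_par /reroute_fl (negbTE wu) (negbTE wx).
rewrite (big_update2 (P := fun w => w != sink) hu hx _ hother); last by rewrite eq_sym.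
rewrite /reroute_par /reroute_fl !eqxx (eq_sym u x) (negbTE xu) hux -/y.
rewrite /dist2 /dot /vsub /=; ring.
Qed.

End Reroute.

Section MoveSteiner.
Variables (n : nat) (Z : 'I_n -> point) (zBS : point) (T : FQST Z zBS).
Variables (j : 'I_(nS T)) (p : point).
Hypothesis p_fresh : forall v, p <> npos T v.

Definition moved_spos k := if k == j then p else spos T k.

Lemma moved_spos_inj : injective moved_spos.
Proof.
move=> k1 k2; rewrite /moved_spos.
case: (k1 =P j) => [->|_]; case: (k2 =P j) => [->|_] // e.
- by case: (p_fresh (v := Some (inr k2))).
- by case: (p_fresh (v := Some (inr k1))).
- exact: spos_inj e.
Qed.

Lemma moved_spos_notZ k i : moved_spos k <> Z i.
Proof.
rewrite /moved_spos; case: (k =P j) => _; last exact: spos_notZ.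
exact: (p_fresh (v := Some (inl i))).
Qed.

Lemma moved_spos_notsink k : moved_spos k <> zBS.
Proof.
rewrite /moved_spos; case: (k =P j) => _; last exact: spos_notsink.
exact: (p_fresh (v := None)).
Qed.

Definition moved : FQST Z zBS :=
  Build_FQST moved_spos_inj moved_spos_notZ moved_spos_notsink
    (@par_reach _ _ _ T) (@fl_pos _ _ _ T) (@fl_source _ _ _ T)
    (@fl_steiner _ _ _ T) (@fl_sink _ _ _ T).

Lemma moved_npos v : npos moved v = if v == Some (inr j) then p else npos T v.
Proof. by case: v => [[i|k]|]. Qed.

End MoveSteiner.

(* The case f(x) <= f(u) for an in-neighbour u of x: conservation forces x to be
   a Steiner point with u as its only in-neighbour, so moving x only affects the
   edges u -> x and x -> par x. *)
Section Bottleneck.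
Variables (n : nat) (Z : 'I_n -> point) (zBS : point) (T : FQST Z zBS).
Variables (u x : node n (nS T)).
Hypotheses (hu : u != sink) (hx : x != sink) (hux : par T u = x)
  (hge : fl T x <= fl T u)
  (hacute : 0 < dot (vsub (npos T u) (npos T x)) (vsub (npos T (par T x)) (npos T x))).

(* x is not a source, whose out-flow exceeds its in-flow by 1. *)
Lemma bottleneck_steiner : exists j, x = Some (inr j).
Proof.
have : x = x by []; case: {2}x => [[i|j]|] ex; last 2 first.
- by exists j.
- by move: hx; rewrite ex.
exfalso.
have := source_balance T i; rewrite -ex.
have := child_le_inflow hu; rewrite hux.
have := fl_pos hu; lra.
Qed.

(* A second in-neighbour would push the out-flow of x above f(u). *)
Lemma bottleneck_only_child w : w != sink -> par T w = x -> w = u.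
Proof.
move=> hw hwx; apply/eqP; apply/negPn/negP => hwu.
have [j ej] := bottleneck_steiner.
have := @big_ge_two_terms _ (fun v => (v != sink) && (par T v == x)) (fl T) u w.
rewrite hu hw hux hwx eqxx eq_sym hwu => /(_ isT isT isT).
have hnonneg v : (v != sink) && (par T v == x) -> 0 <= fl T v.
  by move=> /andP[hv _]; apply: Rlt_le; apply: fl_pos.
move=> /(_ hnonneg); rewrite -/(inflow T x).
have := steiner_balance j; rewrite -ej.
have := fl_pos hw; lra.
Qed.

Lemma bottleneck_flow : fl T x = fl T u.
Proof.
have [j ej] := bottleneck_steiner.
have := steiner_balance j; rewrite -ej.
have := child_le_inflow hu; rewrite hux; lra.
Qed.

Lemma bottleneck_move_improves :
  exists T' : FQST Z zBS, nS T' = nS T /\ cost T' < cost T.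
Proof.
have [j ej] := bottleneck_steiner.
set U := npos T u; set X := npos T x; set Y := npos T (par T x).
have [s [hs hfresh]] := segment_avoids (npos T) (midp U Y) (acute_off_midpoint hacute).
set p := toward_mid U X Y s.
have hp : forall v, p <> npos T v := hfresh.
exists (moved j hp); split => //.
have hnpos v : npos (moved j hp) v = if v == x then p else npos T v.
  by rewrite (moved_npos (p_fresh := hp)) ej.
rewrite /cost (eq_bigr (fun v => fl T v * dist2 (if v == x then p else npos T v)
                                    (if par T v == x then p else npos T (par T v))));
  last by move=> v _; rewrite !hnpos.
have hother w : w != sink -> w != u -> w != x ->
    fl T w * dist2 (if w == x then p else npos T w)
                   (if par T w == x then p else npos T (par T w)) =
    fl T w * dist2 (npos T w) (npos T (par T w)).
  move=> hw wu wx; rewrite (negbTE wx); case: eqP => // /(bottleneck_only_child hw).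
  by move/eqP: wu.
have xu : x != u by rewrite -hux par_neq.
rewrite (big_update2 (P := fun w => w != sink) hu hx _ hother); last by rewrite eq_sym.
rewrite (eq_sym u x) (negbTE xu) hux !eqxx (negbTE (par_neq hx)).
rewrite bottleneck_flow -/U -/X -/Y.
have := toward_mid_shorter hs hacute; rewrite -/p -/U -/X -/Y.
have := fl_pos hu; nra.
Qed.

End Bottleneck.

Lemma acute_improvable n (Z : 'I_n -> point) zBS (T : FQST Z zBS) (u x : node n (nS T)) :
  u != sink -> x != sink -> par T u = x ->
  0 < dot (vsub (npos T u) (npos T x)) (vsub (npos T (par T x)) (npos T x)) ->
  exists T' : FQST Z zBS, nS T' = nS T /\ cost T' < cost T.
Proof.
move=> hu hx hux hacute.
case: (Rlt_le_dec (fl T u) (fl T x)) => hflow.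
- exists (rerouted hu hx hux hflow); split => //.
  by rewrite rerouted_cost; have := fl_pos hu; nra.
- exact: bottleneck_move_improves hu hx hux hflow hacute.
Qed.

Definition MFQST n (Z : 'I_n -> point) zBS (T : FQST Z zBS) : Prop :=
  (exists k : nat, MFQST_bound k T) \/ (exists c : R, 0 < c /\ MFQST_weighted c T).

Lemma MFQST_min_same_size n (Z : 'I_n -> point) zBS (T T' : FQST Z zBS) :
  MFQST T -> nS T' = nS T -> cost T <= cost T'.
Proof.
case=> [[k [hk hopt]]|[c [_ hopt]]] hsize.
- by apply: hopt; rewrite hsize.
- by have := hopt T'; rewrite /cost_c hsize; lra.
Qed.

Theorem mainTheorem11 (n : nat) (Z : 'I_n -> point) (zBS : point)
  (hn : leq 1 n) (hZ : injective Z) (hsink : forall i, Z i <> zBS)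
  (T : FQST Z zBS)
  (hT : (exists k : nat, MFQST_bound k T) \/
        (exists c : R, 0 < c /\ MFQST_weighted c T))
  (x u : node n (nS T))
  (hx : x != sink) (hu : u != sink) (hux : par T u = x)
  (hne1 : npos T u <> npos T x) (hne2 : npos T x <> npos T (par T x)) :
  PI / 2 <= angle (npos T u) (npos T x) (npos T (par T x)).
Proof.
apply: angle_ge_PI2; apply: Rnot_lt_le => hacute.
have [T' [hsize hcost]] := acute_improvable hu hx hux hacute.
have := MFQST_min_same_size (hT : MFQST T) hsize; lra.
Qed.
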